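(* For all $h\ge1$ and $i_1,\dots,i_h,j_1,\dots,j_h\in\{1,\dots,n\}$, $\mathcal K\big([i_1,\dots,i_h|j_1,\dots,j_h]^*\big)=(i_1|j_1)(i_2|j_2)\cdots(i_h|j_h)\in\mathbb{C}[M_{n,n}]$.
   Context: $\mathbb{C}[M_{n,n}]$ is the polynomial algebra in commuting indeterminates $(i|j)$, $1\le i,j\le n$. $D^l_{ij}$ is the derivation of $\mathbb{C}[M_{n,n}]$ with $D^l_{ij}((h|k))=\delta_{jh}(i|k)$. Let $\rho_{ij}(\mathbf p)=D^l_{ij}(\mathbf p)+(i|j)\mathbf p$; the map $e_{ij}\mapsto\rho_{ij}$ extends to an algebra morphism $\tau:\mathbf{U}(gl(n))\to\mathrm{End}_{\mathbb C}(\mathbb{C}[M_{n,n}])$. The Koszul map is the linear map $\mathcal K:\mathbf{U}(gl(n))\to\mathbb{C}[M_{n,n}]$, $\mathcal K(\mathbf P)=\tau(\mathbf P)(1)$. Virtual variables: $A_0=\{\alpha_1,\dots,\alpha_{m_0}\}$ (parity $0$), $A_1=\{\beta_1,\dots,\beta_{m_1}\}$ (parity $1$), $L=\{1,\dots,n\}$ (parity $1$), $m_0,m_1$ large; $gl(m_0|m_1+n)$ has homogeneous basis $e_{a,b}$ of parity $|a|+|b|$ and superbracket $[e_{a,b},e_{c,d}]=\delta_{bc}e_{a,d}-(-1)^{(|a|+|b|)(|c|+|d|)}\delta_{ad}e_{c,b}$, with $\mathbf{U}(gl(n))\subset\mathbf{U}(gl(m_0|m_1+n))$. A product $e_{a_m,b_m}\cdots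 e_{a_1,b_1}$ is irregular if for some $i\le m$ and virtual $\gamma$, $\#\{j\le i:b_j=\gamma\}>\#\{j<i:a_j=\gamma\}$; $\mathbf{Irr}$ is the left ideal they generate; it is known $Virt=\mathbf{U}(gl(n))\oplus\mathbf{Irr}$ is a subalgebra with $\mathbf{Irr}$ a two-sided ideal, and $\mathfrak p$ is the projection $Virt\to\mathbf{U}(gl(n))$ with kernel $\mathbf{Irr}$. The column Capelli *-bitableau is $[i_1,\dots,i_h|j_1,\dots,j_h]^*=\mathfrak p(e_{i_1\beta_1}\cdots e_{i_h\beta_h}e_{\beta_1j_1}\cdots e_{\beta_hj_h})$ with distinct negative virtual $\beta_1,\dots,\beta_h$. *)

From HB Require Import structures.
From mathcomp Require Import all_boot all_order all_algebra all_field.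
Set Implicit Arguments. Unset Strict Implicit. Unset Printing Implicit Defensive.
Import Order.TTheory GRing.Theory Num.Theory.
Local Open Scope ring_scope.

(* The polynomial algebra C[M_{n,n}] in the indeterminates (i|j).      *)
(* A monomial is an exponent function on 'I_n * 'I_n; a polynomial is  *)
(* represented by a finite list of terms (coefficient, monomial); two  *)
(* representations denote the same polynomial iff they have the same   *)
(* coefficient [pcoef] at every monomial.                              *)
Definition monom (n : nat) := {ffun 'I_n * 'I_n -> nat}.
Definition cpoly (n : nat) := seq (algC * monom n).

Definition pcoef n (p : cpoly n) (m : monom n) : algC :=
  \sum_(t <- p | t.2 == m) t.1.

Definition pone n : cpoly n := [:: (1, [ffun => 0%N] : monom n)].

Definition pmulvar n (ij : 'I_n * 'I_n) (p : cpoly n) : cpoly n :=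
  [seq (t.1, [ffun k => (t.2 k + (k == ij))%N] : monom n) | t : algC * monom n <- p].

(* the derivation D^l_{ij}: D^l_{ij}((h|k)) = delta_{jh} (i|k);
   on a monomial x^m: D^l_{ij}(x^m) = sum_k m_{jk} x^(m - e_{jk} + e_{ik}) *)
Definition pDl n (ij : 'I_n * 'I_n) (p : cpoly n) : cpoly n :=
  flatten [seq [seq (t.1 * (t.2 (ij.2, k))%:R,
                     [ffun x => (t.2 x - (x == (ij.2, k)) + (x == (ij.1, k)))%N] : monom n)
               | k <- enum 'I_n] | t : algC * monom n <- p].

Definition rho n (ij : 'I_n * 'I_n) (p : cpoly n) : cpoly n :=
  pDl ij p ++ pmulvar ij p.

Definition pscale n (c : algC) (p : cpoly n) : cpoly n :=
  [seq (c * t.1, t.2) | t <- p].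

(* Elements of U(gl(n)) are represented by formal linear combinations
   of words; the word [:: e_{a_m b_m}; ...; e_{a_1 b_1}] (left to right)
   is the product e_{a_m b_m} ... e_{a_1 b_1}. *)
Definition gl_elt (n : nat) := seq (algC * seq ('I_n * 'I_n)).

(* tau(word)(1), then the Koszul map K(P) = tau(P)(1), extended linearly *)
Definition tau_one n (w : seq ('I_n * 'I_n)) : cpoly n := foldr (@rho n) (pone n) w.
Definition koszul n (P : gl_elt n) : cpoly n :=
  flatten [seq pscale t.1 (tau_one t.2) | t <- P].

(* Indices: inl = positive virtual alpha (parity 0),                   *)
(*          inr (inl _) = negative virtual beta (parity 1),            *)
(*          inr (inr _) = proper symbol in L (parity 1).               *)
Definition vidx (m0 m1 n : nat) := ('I_m0 + ('I_m1 + 'I_n))%type.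

Definition parity m0 m1 n (a : vidx m0 m1 n) : nat :=
  match a with inl _ => 0%N | inr _ => 1%N end.

Definition is_virtual m0 m1 n (a : vidx m0 m1 n) : bool :=
  match a with inl _ => true | inr (inl _) => true | inr (inr _) => false end.

Definition alpha m0 m1 n (k : 'I_m0) : vidx m0 m1 n := inl k.
Definition beta m0 m1 n (k : 'I_m1) : vidx m0 m1 n := inr (inl k).
Definition prop m0 m1 n (k : 'I_n) : vidx m0 m1 n := inr (inr k).

Definition letter m0 m1 n := (vidx m0 m1 n * vidx m0 m1 n)%type.

(* elements of the free associative algebra on the e_{a,b}: formal
   linear combinations of words (left-to-right product) *)
Definition fa m0 m1 n := seq (algC * seq (letter m0 m1 n)).

Definition fcoef m0 m1 n (x : fa m0 m1 n) (w : seq (letter m0 m1 n)) : algC :=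
  \sum_(t <- x | t.2 == w) t.1.

Definition kron (b : bool) : algC := if b then 1 else 0.

(* the defining relator of U(gl(m0|m1+n)):
   e_ab e_cd - (-1)^{(|a|+|b|)(|c|+|d|)} e_cd e_ab - [e_ab, e_cd],
   [e_ab, e_cd] = delta_bc e_ad - (-1)^{(|a|+|b|)(|c|+|d|)} delta_ad e_cb *)
Definition relator m0 m1 n (a b c d : vidx m0 m1 n) : fa m0 m1 n :=
  let s : algC := (-1) ^+ ((parity a + parity b) * (parity c + parity d)) in
  [:: (1, [:: (a, b); (c, d)]);
      (- s, [:: (c, d); (a, b)]);
      (- kron (b == c), [:: (a, d)]);
      (s * kron (a == d), [:: (c, b)])].

Definition sandwich m0 m1 n (u : seq (letter m0 m1 n)) (r : fa m0 m1 n)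
  (v : seq (letter m0 m1 n)) : fa m0 m1 n :=
  [seq (t.1, u ++ t.2 ++ v) | t <- r].

(* For the word w = [:: e_{a_m b_m}; ...; e_{a_1 b_1}]
   let s = rev w, so that nth s (k-1) = e_{a_k b_k}.  The product is
   irregular iff for some i <= m and virtual gamma,
   #{j <= i : b_j = gamma} > #{j < i : a_j = gamma}. *)
Definition irregular m0 m1 n (w : seq (letter m0 m1 n)) : Prop :=
  let s := rev w in
  exists (i : nat) (g : vidx m0 m1 n),
    [/\ (1 <= i <= size s)%N, is_virtual g &
        (count (fun l => l.1 == g) (take i.-1 s) <
         count (fun l => l.2 == g) (take i s))%N].

(* generators (as a linear span) of the kernel of the composite
   free algebra -> U(gl(m0|m1+n)) -> U / Irr :
   two-sided ideal of the relators, plus the left ideal generated by the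
   irregular monomials *)
Definition ker_gen m0 m1 n (r : fa m0 m1 n) : Prop :=
  (exists u v (a b c d : vidx m0 m1 n), r = sandwich u (relator a b c d) v)
  \/ (exists u w, irregular w /\ r = [:: (1, u ++ w)]).

Definition in_span m0 m1 n (G : fa m0 m1 n -> Prop) (x : fa m0 m1 n) : Prop :=
  exists gs : seq (algC * fa m0 m1 n),
    (forall g, g \in gs -> G g.2) /\
    (forall w, fcoef x w = \sum_(g <- gs) g.1 * fcoef g.2 w).

Definition embed m0 m1 n (P : gl_elt n) : fa m0 m1 n :=
  [seq (t.1, [seq (@prop m0 m1 n l.1, @prop m0 m1 n l.2) | l <- t.2]) | t <- P].

Definition fa_sub_word m0 m1 n (X : seq (letter m0 m1 n)) (P : gl_elt n) : fa m0 m1 n :=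
  (1, X) :: [seq (- t.1, t.2) | t <- @embed m0 m1 n P].

Definition capelli_word m0 m1 n h (i j : 'I_h -> 'I_n) (b : 'I_h -> 'I_m1)
  : seq (letter m0 m1 n) :=
  [seq (@prop m0 m1 n (i k), @beta m0 m1 n (b k)) | k <- enum 'I_h] ++
  [seq (@beta m0 m1 n (b k), @prop m0 m1 n (j k)) | k <- enum 'I_h].

(* P is a representative of p(X): P in U(gl(n)) and X - P in Irr *)
Definition proj_rep m0 m1 n (X : seq (letter m0 m1 n)) (P : gl_elt n) : Prop :=
  in_span (@ker_gen m0 m1 n) (fa_sub_word X P).

Definition diag_monom n h (i j : 'I_h -> 'I_n) : cpoly n :=
  foldr (fun k p => pmulvar (i k, j k) p) (pone n) (enum 'I_h).

(* Let gl(m0|m1+n) act on the super-polynomials in the variables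
   x_{a,l} (a a virtual or proper symbol, l in L, parity |a| + 1) by letting
   e_{ab} act as the polarization sum_l x_{a,l} d/dx_{b,l}, plus multiplication
   by x_{a,j} when b = j is proper.  On polynomials in the proper variables
   x_{j,l} = (j|l) this is exactly rho_{ij}, so K(P) is the image of the vacuum
   1 under the (embedded) P.  The action respects the superbracket, and an
   irregular monomial kills 1, since it differentiates some virtual row more
   often than it has filled it.  Hence, for every exponent k, the functional
   "coefficient of x^k in x.1" vanishes on the kernel of the projection p, in
   particular on X - P for the Capelli monomial X.  Finally X.1 is computed
   directly: the right half creates prod_k x_{b_k,j_k}, the left half
   polarizes each b_k into i_k, giving (i_1|j_1)...(i_h|j_h). *)

From mathcomp Require Import all_boot all_order all_algebra all_field.
From Stdlib Require Import FunctionalExtensionality.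
From mathcomp Require Import ring zify.
Set Implicit Arguments. Unset Strict Implicit. Unset Printing Implicit Defensive.
Import Order.TTheory GRing.Theory Num.Theory.
Local Open Scope ring_scope.

Lemma sum_delta (R : pzSemiRingType) (I : eqType) (r : seq I) (i0 : I) (X : I -> R) :
  uniq r -> i0 \in r -> \sum_(i <- r) (i0 == i)%:R * X i = X i0.
Proof.
move=> ur i0r; rewrite (bigD1_seq i0) //= eqxx mul1r big1 ?addr0 // => i.
by rewrite eq_sym => /negbTE ->; rewrite mul0r.
Qed.

(* The super-Fock model: states are coefficient functions on the exponent
   vectors of the variables x_{a,l}, a a symbol of gl(m0|m1+n) and l in L. *)
Section SuperFock.
Variables m0 m1 n : nat.
Local Notation var := (vidx m0 m1 n * 'I_n)%type.
Local Notation expo := {ffun var -> nat}.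
Local Notation state := (expo -> algC).

(* The variable x_{a,l} has parity |a| + |l| = |a| + 1: it is odd exactly when
   a is a positive virtual symbol. *)
Definition odd_row (a : vidx m0 m1 n) : bool := if a is inl _ then true else false.
Definition odd_var (t : var) : bool := odd_row t.1.

Definition incr (k : expo) (t : var) : expo := [ffun u => (k u + (u == t))%N].
Definition decr (k : expo) (t : var) : expo := [ffun u => (k u - (u == t))%N].

Lemma incrE (k : expo) (t u : var) : incr k t u = (k u + (u == t))%N.
Proof. by rewrite ffunE. Qed.
Lemma decrE (k : expo) (t u : var) : decr k t u = (k u - (u == t))%N.
Proof. by rewrite ffunE. Qed.
Lemma incr_ne (k : expo) (t u : var) : t != u -> incr k t u = k u.
Proof. by move=> tu; rewrite incrE eq_sym (negbTE tu) addn0. Qed.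
Lemma decr_ne (k : expo) (t u : var) : t != u -> decr k t u = k u.
Proof. by move=> tu; rewrite decrE eq_sym (negbTE tu) subn0. Qed.

Lemma decr_incr (k : expo) (t : var) : decr (incr k t) t = k.
Proof. by apply/ffunP=> u; rewrite !ffunE addnK. Qed.
Lemma incr_decr (k : expo) (t : var) : (0 < k t)%N -> incr (decr k t) t = k.
Proof.
move=> kt; apply/ffunP=> u; rewrite !ffunE.
by case: eqP=> [->|_]; rewrite ?subnK // subn0 addn0.
Qed.
Lemma incr_decrC (k : expo) (t u : var) : t != u -> decr (incr k u) t = incr (decr k t) u.
Proof.
move=> tu; apply/ffunP=> x; rewrite !ffunE.
case: (x =P t) => [xt|_]; case: (x =P u) => [xu|_] /=; rewrite ?addn0 ?subn0 //.
by move: tu; rewrite -xt -xu eqxx.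
Qed.
Lemma decrC (k : expo) (t u : var) : decr (decr k t) u = decr (decr k u) t.
Proof. by apply/ffunP=> x; rewrite !ffunE subnAC. Qed.
Lemma incrC (k : expo) (t u : var) : incr (incr k t) u = incr (incr k u) t.
Proof. by apply/ffunP=> x; rewrite !ffunE addnAC. Qed.
Lemma incr_eq (k k' : expo) (t : var) :
  (incr k t == k') = (0 < k' t)%N && (k == decr k' t).
Proof.
apply/eqP/andP=> [<-|[kt /eqP ->]]; last exact: incr_decr.
by rewrite decr_incr incrE eqxx addn1.
Qed.

(* The Koszul sign of x_t against the monomial x^k: odd variables are put
   in a fixed total order, and x_t must jump over the odd variables before it. *)
Definition precedes (u t : var) : bool := odd_var u && (enum_rank u < enum_rank t)%N.
Definition ksign (t : var) (k : expo) : algC :=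
  (-1) ^+ (\sum_(u : var) precedes u t * k u)%N.

Lemma ksign_incr (t : var) (k : expo) (v : var) :
  ksign t (incr k v) = ksign t k * (-1) ^+ precedes v t.
Proof.
rewrite /ksign -exprD; congr (_ ^+ _).
under eq_bigr => u _ do rewrite incrE mulnDr.
rewrite big_split /=; congr (_ + _)%N.
rewrite (bigD1 v) //= eqxx muln1 big1 ?addn0 // => u /negbTE ->.
by rewrite muln0.
Qed.
Lemma ksign_decr (t : var) (k : expo) (v : var) : (0 < k v)%N ->
  ksign t k = ksign t (decr k v) * (-1) ^+ precedes v t.
Proof. by move=> kv; rewrite -ksign_incr incr_decr. Qed.

Lemma precedes_irr (u : var) : precedes u u = false.
Proof. by rewrite /precedes ltnn andbF. Qed.

(* Of two distinct odd variables exactly one precedes the other, so their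
   Koszul signs are opposite: this is the anticommutativity of odd variables. *)
Lemma precedes_anti (u t : var) : u != t -> odd_var u -> odd_var t ->
  (-1) ^+ precedes u t = - (-1) ^+ precedes t u :> algC.
Proof.
move=> ut pu pt; rewrite /precedes pu pt /=.
case: ltngtP => [_|_|/val_inj/enum_rank_inj eq_ut]; rewrite ?expr0 ?expr1 ?opprK //.
by rewrite eq_ut eqxx in ut.
Qed.

Lemma ksign_sq (t : var) (k : expo) : ksign t k * ksign t k = 1.
Proof. by rewrite /ksign -exprD -signr_odd oddD addbb. Qed.

(* A state f : expo -> algC is the coefficient function of the super-polynomial
   sum_k f k x^k (odd variables in the fixed order).  Multiplication by x_t and
   the left derivative d/dx_t act on coefficients with the following weights;
   for odd t the exponent parity encodes x_t^2 = 0. *)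
Definition mul_wt (t : var) (k : expo) : algC :=
  if odd_var t then (odd (k t))%:R * ksign t k else (0 < k t)%N%:R.
Definition der_wt (t : var) (k : expo) : algC :=
  if odd_var t then (~~ odd (k t))%:R * ksign t k else (k t).+1%:R.
Definition mulv (t : var) (f : state) : state := fun k => mul_wt t k * f (decr k t).
Definition derv (t : var) (f : state) : state := fun k => der_wt t k * f (incr k t).

Lemma mul_wt0 (t : var) (k : expo) : k t = 0%N -> mul_wt t k = 0.
Proof. by rewrite /mul_wt => ->; case: odd_var; rewrite ?mul0r. Qed.

Lemma derv_mulv (f : state) (u t : var) (k : expo) :
  derv u (mulv t f) k = (u == t)%:R * f k + (-1) ^+ (odd_var u && odd_var t) * mulv t (derv u f) k.
Proof.
rewrite /derv /mulv; case: (eqVneq u t) => [<-|ut].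
  rewrite decr_incr mul1r andbb /der_wt /mul_wt incrE eqxx ksign_incr precedes_irr expr0 mulr1.
  case: (posnP (k u)) => [k0|]; first rewrite k0 /=.
    by case: (odd_var u); rewrite /= ?mul0r ?mulr0 ?addr0 ?mul1r ?mulrA ?ksign_sq ?mul1r.
  move=> kpos; rewrite incr_decr // decrE eqxx.
  have -> : ksign u (decr k u) = ksign u k.
    by rewrite (ksign_decr u kpos) precedes_irr expr0 mulr1.
  move: kpos; case: (k u) => // c _; rewrite addn1 subn1 /=.
  case: (odd_var u) => /=; last by ring.
  by rewrite negbK /ksign -signr_odd; case: (odd c); case: (odd _) => /=; ring.
rewrite mul0r add0r incr_decrC 1?eq_sym // !mulrA; congr (_ * _).
case: (posnP (k t)) => [k0|kpos].
  by rewrite (mul_wt0 k0) (@mul_wt0 t (incr k u)) ?incr_ne // !mulr0 mul0r.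
have tu : t != u by rewrite eq_sym.
rewrite /der_wt /mul_wt (decr_ne k tu) (incr_ne k ut) ksign_incr (ksign_decr u kpos).
case pu: (odd_var u); case pt: (odd_var t); rewrite /=.
- by rewrite (precedes_anti ut pu pt); case: (precedes t u) => /=; ring.
all: by rewrite /precedes ?pu ?pt /=; ring.
Qed.

Lemma mulv_mulv (f : state) (t u : var) (k : expo) :
  mulv t (mulv u f) k = (-1) ^+ (odd_var t && odd_var u) * mulv u (mulv t f) k.
Proof.
rewrite /mulv decrC !mulrA; congr (_ * _).
case: (eqVneq t u) => [<-|tu].
  rewrite /mul_wt; case: (odd_var t) => /=; last by rewrite expr0 mul1r.
  rewrite decrE eqxx; case: (k t) => [|c] /=; first by rewrite !mul0r mulr0.
  by rewrite subn1 /=; case: (odd c) => /=; rewrite !(mul0r, mulr0).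
have ut : u != t by rewrite eq_sym.
case: (posnP (k t)) => [k0|ktpos].
  by rewrite (mul_wt0 k0) (@mul_wt0 t (decr k u)) ?decr_ne // !mulr0 mul0r.
case: (posnP (k u)) => [k0|kupos].
  by rewrite (mul_wt0 k0) (@mul_wt0 u (decr k t)) ?decr_ne // !mulr0 mul0r.
rewrite /mul_wt (decr_ne k tu) (decr_ne k ut) (ksign_decr u ktpos) (ksign_decr t kupos).
case pu: (odd_var u); case pt: (odd_var t); rewrite /=.
- by rewrite (precedes_anti ut pu pt); case: (precedes t u) => /=; ring.
all: by rewrite /precedes ?pu ?pt /=; ring.
Qed.

Lemma derv_derv (f : state) (t u : var) (k : expo) :
  derv t (derv u f) k = (-1) ^+ (odd_var t && odd_var u) * derv u (derv t f) k.
Proof.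
rewrite /derv incrC !mulrA; congr (_ * _).
case: (eqVneq t u) => [<-|tu].
  rewrite /der_wt; case: (odd_var t); last by rewrite expr0 mul1r.
  by rewrite incrE eqxx addn1 /=; case: (odd (k t)) => /=; ring.
have ut : u != t by rewrite eq_sym.
rewrite /der_wt (incr_ne k ut) (incr_ne k tu) !ksign_incr.
case pu: (odd_var u); case pt: (odd_var t); rewrite /=.
- by rewrite (precedes_anti ut pu pt); case: (precedes t u) => /=; ring.
all: by rewrite /precedes ?pu ?pt /=; ring.
Qed.

Definition linear_op (A : state -> state) :=
  forall (I : Type) (r : seq I) (c : I -> algC) (F : I -> state) (k : expo),
    A (fun k' => \sum_(i <- r) c i * F i k') k = \sum_(i <- r) c i * A (F i) k.

Lemma linear_mulv (t : var) : linear_op (mulv t).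
Proof. by move=> I r c F k; rewrite /mulv mulr_sumr; apply: eq_bigr => i _; rewrite mulrCA. Qed.
Lemma linear_derv (t : var) : linear_op (derv t).
Proof. by move=> I r c F k; rewrite /derv mulr_sumr; apply: eq_bigr => i _; rewrite mulrCA. Qed.
Lemma linear_id : linear_op id.
Proof. by []. Qed.
Lemma linear_comp (A B : state -> state) :
  linear_op A -> linear_op B -> linear_op (fun f => A (B f)).
Proof.
move=> linA linB I r c F k.
have -> : B (fun k' => \sum_(i <- r) c i * F i k') = fun k' => \sum_(i <- r) c i * B (F i) k'.
  by apply: functional_extensionality => k'; apply: linB.
exact: linA.
Qed.
Lemma linear_sum (J : Type) (s : seq J) (A : J -> state -> state) :
  (forall j, linear_op (A j)) -> linear_op (fun f k => \sum_(j <- s) A j f k).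
Proof.
move=> linA I r c F k /=.
under eq_bigr => j _ do rewrite linA.
by rewrite exchange_big; apply: eq_bigr => i _; rewrite mulr_sumr.
Qed.

Section LinearOp.
Variable A : state -> state.
Hypothesis linA : linear_op A.

Lemma linear_big (J : Type) (r : seq J) (F : J -> state) :
  A (fun k => \sum_(j <- r) F j k) = fun k => \sum_(j <- r) A (F j) k.
Proof.
apply: functional_extensionality => k.
transitivity (\sum_(j <- r) 1 * A (F j) k); last by apply: eq_bigr => j _; rewrite mul1r.
rewrite -linA; congr A; apply: functional_extensionality => k'.
by apply: eq_bigr => j _; rewrite mul1r.
Qed.
Lemma linear_scale (a : algC) (f : state) : A (fun k => a * f k) = fun k => a * A f k.
Proof.
apply: functional_extensionality => k.
have := linA [:: tt] (fun _ => a) (fun _ => f) k; rewrite !big_seq1 => <-.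
by congr A; apply: functional_extensionality => k'; rewrite big_seq1.
Qed.
Lemma linear_comb2 (a b : algC) (f g : state) :
  A (fun k => a * f k + b * g k) = fun k => a * A f k + b * A g k.
Proof.
apply: functional_extensionality => k.
have := linA [:: true; false] (fun x => if x then a else b) (fun x => if x then f else g) k.
rewrite !big_cons !big_nil /= !addr0 => <-.
by congr A; apply: functional_extensionality => k'; rewrite !big_cons big_nil /= addr0.
Qed.
Lemma linear_zero : A (fun _ => 0) = fun _ => 0.
Proof.
apply: functional_extensionality => k.
by have := linA [::] (fun _ : unit => 0) (fun _ => fun _ => 0) k; rewrite !big_nil.
Qed.
End LinearOp.

(* Derivations are indexed by [option var], [None] standing for "no derivative";
   [polop t u] is the polarization-type operator x_t d/dx_u (or just x_t). *)
Definition dervo (ou : option var) (f : state) : state :=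
  if ou is Some u then derv u f else f.
Definition odd_opt (ou : option var) : bool := if ou is Some u then odd_var u else false.
Definition eq_opt (ou : option var) (t : var) : bool := if ou is Some u then u == t else false.
Definition polop (t : var) (u : option var) (f : state) : state := mulv t (dervo u f).

Lemma linear_dervo (u : option var) : linear_op (dervo u).
Proof. by case: u => [u|]; [exact: linear_derv | exact: linear_id]. Qed.
Lemma linear_polop (t : var) (u : option var) : linear_op (polop t u).
Proof. exact: linear_comp (linear_mulv t) (linear_dervo u). Qed.

Lemma dervo_mulv (f : state) (u : option var) (t : var) :
  dervo u (mulv t f) =
  fun k => (eq_opt u t)%:R * f k + (-1) ^+ (odd_opt u && odd_var t) * mulv t (dervo u f) k.
Proof.
apply: functional_extensionality => k; case: u => [u|] /=; first exact: derv_mulv.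
by rewrite mul0r add0r expr0 mul1r.
Qed.
Lemma dervo_dervo (f : state) (t u : option var) :
  dervo t (dervo u f) = fun k => (-1) ^+ (odd_opt t && odd_opt u) * dervo u (dervo t f) k.
Proof.
apply: functional_extensionality => k.
by case: t => [t|]; case: u => [u|] /=; rewrite ?andbF ?expr0 ?mul1r //; apply: derv_derv.
Qed.

Lemma polop_comm (f : state) (t v : var) (u w : option var) (k : expo) :
  polop t u (polop v w f) k = (eq_opt u v)%:R * polop t w f k
    + (-1) ^+ ((odd_var t (+) odd_opt u) && (odd_var v (+) odd_opt w)) * polop v w (polop t u f) k
    - (-1) ^+ ((odd_var t (+) odd_opt u) && (odd_var v (+) odd_opt w))
      * ((eq_opt w t)%:R * polop v u f k).
Proof.
rewrite /polop dervo_mulv (linear_comb2 (linear_mulv t)) mulv_mulv (dervo_dervo f u w).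
rewrite (linear_scale (linear_mulv t)) (linear_scale (linear_mulv v)).
rewrite (dervo_mulv (dervo u f) w t) (linear_comb2 (linear_mulv v)).
by case: (odd_var t); case: (odd_opt u); case: (odd_var v); case: (odd_opt w) => /=; ring.
Qed.

(* The letter e_{ab} acts as the polarization operator sum_l x_{a,l} d/dx_{b,l},
   plus multiplication by x_{a,j} when b = j is a proper symbol: this extra term
   is the shift (i|j) in rho_{ij}. *)
Definition proper_of (b : vidx m0 m1 n) : option 'I_n :=
  if b is inr (inr j) then Some j else None.
Definition pol_terms (l : letter m0 m1 n) : seq (var * option var) :=
  [seq ((l.1, k), Some (l.2, k)) | k <- enum 'I_n] ++
  (if proper_of l.2 is Some j then [:: ((l.1, j), None)] else [::]).
Definition lact (l : letter m0 m1 n) (f : state) : state :=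
  fun k => \sum_(x <- pol_terms l) polop x.1 x.2 f k.

Lemma linear_lact (l : letter m0 m1 n) : linear_op (lact l).
Proof. by apply: linear_sum => x; apply: linear_polop. Qed.

Lemma pol_terms_parity (l : letter m0 m1 n) (x : var * option var) : x \in pol_terms l ->
  odd_var x.1 = odd_row l.1 /\ odd_opt x.2 = odd_row l.2.
Proof.
case: l => a b; rewrite mem_cat => /orP[/mapP[k _ ->] //|].
by case: b => [?|[?|j]] //=; rewrite inE => /eqP ->.
Qed.

Lemma contract_terms (a b c d : vidx m0 m1 n) (G : var -> option var -> algC) :
  \sum_(x <- pol_terms (a, b)) \sum_(y <- pol_terms (c, d)) (eq_opt x.2 y.1)%:R * G x.1 y.2
  = (b == c)%:R * \sum_(z <- pol_terms (a, d)) G z.1 z.2.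
Proof.
rewrite /pol_terms /= big_cat /=.
have -> : \sum_(x <- (if proper_of b is Some j then [:: ((a, j), None)] else [::]))
    \sum_(y <- [seq ((c, k), Some (d, k)) | k <- enum 'I_n] ++
              (if proper_of d is Some j then [:: ((c, j), None)] else [::]))
      (eq_opt x.2 y.1)%:R * G x.1 y.2 = 0.
  by case: (proper_of b) => [j|]; rewrite ?big_nil // big_seq1 big1 // => y _; rewrite mul0r.
rewrite addr0 big_map big_cat big_map mulrDr /=.
under eq_bigr => k _ do rewrite big_cat big_map /=.
rewrite big_split /=; congr (_ + _).
  case: (eqVneq b c) => [<-|bc]; last first.
    by rewrite mul0r big1 // => k _; rewrite big1 // => l _; rewrite xpair_eqE (negbTE bc) mul0r.
  rewrite mul1r; apply: eq_bigr => k _.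
  under eq_bigr => l _ do rewrite xpair_eqE eqxx.
  by rewrite sum_delta ?enum_uniq ?mem_enum.
case: (proper_of d) => [j|]; last by rewrite big_nil mulr0 big1 // => k _; rewrite big_nil.
rewrite big_seq1 /=; under eq_bigr => k _ do rewrite big_seq1 /= xpair_eqE.
case: eqVneq => _ /=; last by rewrite mul0r big1 // => k _; rewrite mul0r.
by rewrite mul1r; under eq_bigr => k _ do rewrite eq_sym; rewrite sum_delta ?enum_uniq ?mem_enum.
Qed.

Lemma lact_lact (l1 l2 : letter m0 m1 n) (f : state) (k : expo) :
  lact l1 (lact l2 f) k =
  \sum_(x <- pol_terms l1) \sum_(y <- pol_terms l2) polop x.1 x.2 (polop y.1 y.2 f) k.
Proof. by apply: eq_bigr => x _; rewrite (linear_big (linear_polop _ _)). Qed.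

Definition bsign (a b c d : vidx m0 m1 n) : algC :=
  (-1) ^+ ((odd_row a (+) odd_row b) && (odd_row c (+) odd_row d)).

Lemma lact_comm (a b c d : vidx m0 m1 n) (f : state) (k : expo) :
  lact (a, b) (lact (c, d) f) k =
    bsign a b c d * lact (c, d) (lact (a, b) f) k + (b == c)%:R * lact (a, d) f k
    - bsign a b c d * (a == d)%:R * lact (c, b) f k.
Proof.
set s := bsign a b c d; rewrite lact_lact.
under eq_big_seq => x xin do under eq_big_seq => y yin do
  rewrite polop_comm (proj1 (pol_terms_parity xin)) (proj2 (pol_terms_parity xin))
          (proj1 (pol_terms_parity yin)) (proj2 (pol_terms_parity yin)) -/s.
under eq_bigr => x _ do rewrite big_split /= big_split /= sumrN -!mulr_sumr.
rewrite big_split /= big_split /= sumrN -!mulr_sumr.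
rewrite (contract_terms a b c d (fun t u => polop t u f k)) /=.
rewrite (exchange_big _ (pol_terms (a, b)) (pol_terms (c, d))) /=.
rewrite [X in _ - s * X](exchange_big _ (pol_terms (a, b)) (pol_terms (c, d))) /=.
rewrite (contract_terms c d a b (fun t u => polop t u f k)) /= [d == a]eq_sym -lact_lact.
by rewrite /lact /s /bsign; ring.
Qed.

Definition wact (w : seq (letter m0 m1 n)) (f : state) : state := foldr lact f w.
Definition vacuum : state := fun k => (k == [ffun => 0%N])%:R.

Lemma linear_wact (w : seq (letter m0 m1 n)) : linear_op (wact w).
Proof.
elim: w => [|l w IH] /=; [exact: linear_id | exact: linear_comp (linear_lact l) IH].
Qed.
Lemma wact_cat (u v : seq (letter m0 m1 n)) (f : state) :
  wact (u ++ v) f = wact u (wact v f).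
Proof. by rewrite /wact foldr_cat. Qed.

Definition vac_coef (k : expo) (x : fa m0 m1 n) : algC :=
  \sum_(t <- x) t.1 * wact t.2 vacuum k.

Lemma relator_sign (a b c d : vidx m0 m1 n) :
  (-1) ^+ ((parity a + parity b) * (parity c + parity d)) = bsign a b c d.
Proof.
have odd_parity (e : vidx m0 m1 n) : odd (parity e) = ~~ odd_row e by case: e => [?|[?|?]].
rewrite -signr_odd oddM !oddD !odd_parity /bsign.
by case: (odd_row a); case: (odd_row b); case: (odd_row c); case: (odd_row d).
Qed.

Lemma vac_coef_relator (u v : seq (letter m0 m1 n)) (a b c d : vidx m0 m1 n) (k : expo) :
  vac_coef k (sandwich u (relator a b c d) v) = 0.
Proof.
rewrite /vac_coef /sandwich big_map.
under eq_bigr => t _ do rewrite !wact_cat.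
set g := wact v vacuum; rewrite -(linear_wact u).
have -> : (fun k' => \sum_(t <- relator a b c d) t.1 * wact t.2 g k') = fun _ => 0.
  apply: functional_extensionality => k'.
  rewrite /relator !big_cons big_nil /= lact_comm relator_sign.
  by case: (b == c); case: (a == d) => /=; ring.
by rewrite (linear_zero (linear_wact u)).
Qed.

(* Homogeneity in the row of a symbol g: every letter e_{ab} raises the degree
   in g by (a == g) - (b == g), and a derivative applied in negative degree
   gives 0.  This is why irregular monomials annihilate the vacuum. *)
Definition vdeg (g : vidx m0 m1 n) (k : expo) : nat := (\sum_(l < n) k (g, l))%N.
Definition homog (g : vidx m0 m1 n) (d : int) (f : state) :=
  forall k, f k != 0 -> (vdeg g k)%:Z = d.

Lemma vdeg_incr (g : vidx m0 m1 n) (k : expo) (t : var) :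
  vdeg g (incr k t) = (vdeg g k + (t.1 == g))%N.
Proof.
rewrite /vdeg; under eq_bigr => l _ do rewrite incrE.
rewrite big_split /=; congr (_ + _)%N.
case: t => a l0 /=; case: (eqVneq a g) => [->|ag].
  rewrite (bigD1 l0) //= eqxx big1 // => l /negbTE ln.
  by rewrite xpair_eqE ln andbF.
by rewrite big1 // => l _; rewrite xpair_eqE eq_sym (negbTE ag).
Qed.

Lemma homog_mulv (g : vidx m0 m1 n) (d : int) (f : state) (t : var) :
  homog g d f -> homog g (d + (t.1 == g)%:Z) (mulv t f).
Proof.
move=> hf k; rewrite /mulv mulf_eq0 negb_or => /andP[wt_neq0 /hf].
have kt : (0 < k t)%N by apply: contraR wt_neq0; rewrite -eqn0Ngt => /eqP /mul_wt0 ->.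
by rewrite -{2}(incr_decr kt) vdeg_incr PoszD => ->.
Qed.
Lemma homog_derv (g : vidx m0 m1 n) (d : int) (f : state) (t : var) :
  homog g d f -> homog g (d - (t.1 == g)%:Z) (derv t f).
Proof.
move=> hf k; rewrite /derv mulf_eq0 negb_or => /andP[_ /hf].
by rewrite vdeg_incr PoszD => <-; rewrite addrK.
Qed.
Lemma homog_neg (g : vidx m0 m1 n) (d : int) (f : state) :
  homog g d f -> d < 0 -> f = fun _ => 0.
Proof.
move=> hf dneg; apply: functional_extensionality => k.
by apply/eqP; apply: contraTT dneg => /hf <-; rewrite -leNgt.
Qed.
Lemma homog_sum (g : vidx m0 m1 n) (d : int) (J : eqType) (r : seq J) (F : J -> state) :
  (forall x, x \in r -> homog g d (F x)) -> homog g d (fun k => \sum_(x <- r) F x k).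
Proof.
move=> hF k; case: (eqVneq (vdeg g k)%:Z d) => // hd.
rewrite big_seq big1 ?eqxx // => x xr.
by case: (eqVneq (F x k) 0) => // /(hF x xr) deg_eq; rewrite deg_eq eqxx in hd.
Qed.

Lemma proper_not_virtual (g b : vidx m0 m1 n) (j : 'I_n) :
  is_virtual g -> proper_of b = Some j -> (b == g) = false.
Proof. by case: b => [?|[?|j']] //= gv _; apply/negbTE; apply: contraTneq gv => <-. Qed.

Lemma homog_lact (g a b : vidx m0 m1 n) (d : int) (f : state) :
  is_virtual g -> homog g d f -> homog g (d + (a == g)%:Z - (b == g)%:Z) (lact (a, b) f).
Proof.
move=> gv hf; apply: homog_sum => x; rewrite mem_cat => /orP[/mapP[l _ ->]|].
  have := homog_mulv (t := (a, l)) (homog_derv (t := (b, l)) hf).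
  by move=> H k /H ->; rewrite addrAC.
case bj: (proper_of b) => [j|] //; rewrite inE => /eqP -> /=.
by rewrite (proper_not_virtual gv bj) subr0; apply: homog_mulv.
Qed.

Lemma lact_vanish (g a b : vidx m0 m1 n) (d : int) (f : state) :
  is_virtual g -> homog g d f -> d - (b == g)%:Z < 0 -> lact (a, b) f = fun _ => 0.
Proof.
move=> gv hf dneg; apply: functional_extensionality => k.
rewrite /lact big1_seq // => x /andP[_]; rewrite mem_cat => /orP[/mapP[l _ ->]|].
  by rewrite /polop /= (homog_neg (homog_derv (t := (b, l)) hf)) // (linear_zero (linear_mulv _)).
case bj: (proper_of b) => [j|] //; rewrite inE => /eqP -> /=.
move: dneg; rewrite (proper_not_virtual gv bj) subr0 => dneg.
by rewrite /polop /= (homog_neg hf dneg) (linear_zero (linear_mulv _)).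
Qed.

Lemma homog_wact (g : vidx m0 m1 n) (w : seq (letter m0 m1 n)) : is_virtual g ->
  homog g ((count (fun l => l.1 == g) w)%:Z - (count (fun l => l.2 == g) w)%:Z)
    (wact w vacuum).
Proof.
move=> gv; elim: w => [|[a b] w IH] /=.
  move=> k; rewrite /vacuum pnatr_eq0 eqb0 negbK => /eqP ->.
  by rewrite /vdeg big1 // => l _; rewrite ffunE.
by move=> k /(homog_lact gv IH) ->; rewrite !PoszD; ring.
Qed.

Lemma irregular_split (w : seq (letter m0 m1 n)) : irregular w ->
  exists q x p g, [/\ w = q ++ x :: p, is_virtual g &
    (count (fun l => l.1 == g) p < count (fun l => l.2 == g) p + (x.2 == g))%N].
Proof.
case=> -[|i] [g [/andP[_ isz] gv]] //=.
have rw := take_nth (g, g) isz; set x := nth (g, g) (rev w) i in rw.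
rewrite rw -cats1 count_cat /= addn0 => lt_count.
exists (rev (drop i.+1 (rev w))), x, (rev (take i (rev w))), g.
rewrite !count_rev; split => //.
by rewrite -rev_rcons -rw -rev_cat cat_take_drop revK.
Qed.

Lemma irregular_annihilates (w : seq (letter m0 m1 n)) :
  irregular w -> wact w vacuum = fun _ => 0.
Proof.
case/irregular_split=> q [[a b] [p [g [-> gv lt_count]]]].
rewrite wact_cat /= (lact_vanish a gv (homog_wact (w := p) gv)).
  exact: linear_zero (linear_wact q).
move: lt_count => /=; case: (b == g); rewrite /= ?addn0 ?addn1; lia.
Qed.

(* C[M_{n,n}] sits inside the states as the polynomials in the even variables
   x_{j,l} = (j|l) of the proper rows. *)
Definition embed_expo (m : monom n) : expo :=
  [ffun t : var => if t.1 is inr (inr r) then m (r, t.2) else 0%N].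
Definition of_cpoly (p : cpoly n) : state :=
  fun k => \sum_(t <- p | embed_expo t.2 == k) t.1.

Lemma embed_expo_inj : injective embed_expo.
Proof.
move=> m m' eq_m; apply/ffunP => -[r l].
by have := congr1 (fun k : expo => k (@prop m0 m1 n r, l)) eq_m; rewrite !ffunE.
Qed.
Lemma of_cpoly_embed (p : cpoly n) (m : monom n) : of_cpoly p (embed_expo m) = pcoef p m.
Proof. by apply: eq_bigl => t; rewrite (inj_eq embed_expo_inj). Qed.
Lemma of_cpoly_cat (p q : cpoly n) (k : expo) : of_cpoly (p ++ q) k = of_cpoly p k + of_cpoly q k.
Proof. by rewrite /of_cpoly big_cat. Qed.
Lemma of_cpoly_one : of_cpoly (pone n) = vacuum.
Proof.
apply: functional_extensionality => k; rewrite /of_cpoly /pone big_cons big_nil /vacuum /= addr0.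
have -> : embed_expo [ffun => 0%N] = [ffun => 0%N].
  by apply/ffunP => -[[?|[?|?]] ?]; rewrite !ffunE //= ffunE.
by rewrite eq_sym; case: eqP.
Qed.

Lemma embed_expo_incr (m : monom n) (ij : 'I_n * 'I_n) :
  embed_expo [ffun k => (m k + (k == ij))%N] = incr (embed_expo m) (@prop m0 m1 n ij.1, ij.2).
Proof.
apply/ffunP => -[a l]; rewrite !ffunE /=; case: a => [?|[?|r]] //=.
by rewrite ffunE; case: ij => i j; rewrite !xpair_eqE.
Qed.

Lemma of_cpoly_mulvar (ij : 'I_n * 'I_n) (p : cpoly n) :
  of_cpoly (pmulvar ij p) = mulv (@prop m0 m1 n ij.1, ij.2) (of_cpoly p).
Proof.
apply: functional_extensionality => k; rewrite /of_cpoly /pmulvar big_map /mulv /mul_wt /=.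
under eq_bigl => t do rewrite embed_expo_incr incr_eq.
by case: (0 < k _)%N; rewrite /= ?mul1r // mul0r big_pred0.
Qed.

Lemma polarize_reindex (X k : expo) (t u : var) :
  ((incr (decr X u) t == k) * X u =
   ((0 < k t) && (X == incr (decr k t) u)) * (decr k t u).+1)%N.
Proof.
case: (posnP (X u)) => [X0|Xpos].
  rewrite X0 muln0; case: eqP => [XE|]; last by rewrite andbF.
  by move: X0; rewrite XE incrE eqxx addn1.
rewrite incr_eq; case: (0 < k t)%N => //=.
case: (eqVneq X (incr (decr k t) u)) => [XE|XN].
  by rewrite {1}XE decr_incr eqxx XE incrE eqxx addn1.
by case: eqP => // XE; case/eqP: XN; rewrite -XE incr_decr.
Qed.

Lemma embed_expo_polarize (m : monom n) (i j l : 'I_n) :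
  embed_expo [ffun x => (m x - (x == (j, l)) + (x == (i, l)))%N] =
  incr (decr (embed_expo m) (@prop m0 m1 n j, l)) (@prop m0 m1 n i, l).
Proof.
apply/ffunP => -[a l']; rewrite !ffunE /=; case: a => [?|[?|r]] //=.
by rewrite ffunE !xpair_eqE.
Qed.

Lemma of_cpoly_Dl (ij : 'I_n * 'I_n) (p : cpoly n) (k : expo) :
  of_cpoly (pDl ij p) k = \sum_(l <- enum 'I_n)
     mulv (@prop m0 m1 n ij.1, l) (derv (@prop m0 m1 n ij.2, l) (of_cpoly p)) k.
Proof.
rewrite /of_cpoly /pDl big_flatten big_map /=.
under eq_bigr => t _ do rewrite big_map big_mkcond /=.
rewrite exchange_big /=; apply: eq_bigr => l _.
rewrite /mulv /derv /mul_wt /der_wt /= mulr_sumr mulr_sumr [RHS]big_mkcond.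
have if_nat (c : bool) (x : algC) : (if c then x else 0) = c%:R * x.
  by case: c; rewrite ?mul1r ?mul0r.
apply: eq_bigr => t _ /=; rewrite embed_expo_polarize !if_nat.
set X := embed_expo t.2; set u := (@prop m0 m1 n ij.2, l); set v := (@prop m0 m1 n ij.1, l).
have Xu : X u = t.2 (ij.2, l) by rewrite /X ffunE.
have := polarize_reindex X k v u; rewrite -Xu => /(congr1 (fun x : nat => x%:R : algC)).
rewrite !natrM -mulnb natrM => reindex.
transitivity (t.1 * ((incr (decr X u) v == k)%:R * (X u)%:R)); first by rewrite Xu; ring.
by rewrite reindex; ring.
Qed.

(* rho_{ij} is the action of the letter e_{ij} on the embedded polynomials, so
   the Koszul map is the vacuum action of the embedded words. *)
Lemma of_cpoly_rho (ij : 'I_n * 'I_n) (p : cpoly n) :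
  of_cpoly (rho ij p) = lact (@prop m0 m1 n ij.1, @prop m0 m1 n ij.2) (of_cpoly p).
Proof.
apply: functional_extensionality => k.
rewrite /rho of_cpoly_cat of_cpoly_Dl of_cpoly_mulvar.
by rewrite /lact /pol_terms big_cat [in RHS]big_map big_seq1.
Qed.

Lemma of_cpoly_tau (w : seq ('I_n * 'I_n)) :
  of_cpoly (tau_one w) = wact [seq (@prop m0 m1 n l.1, @prop m0 m1 n l.2) | l <- w] vacuum.
Proof. by elim: w => [|l w IH] /=; [exact: of_cpoly_one | rewrite of_cpoly_rho IH]. Qed.

Definition delta_state (k0 : expo) : state := fun k => (k == k0)%:R.
Definition expo_of (s : seq var) : expo := [ffun u => count_mem u s].

Lemma expo_of_cons (s : seq var) (t : var) : incr (expo_of s) t = expo_of (t :: s).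
Proof. by apply/ffunP => u; rewrite !ffunE /= addnC eq_sym. Qed.
Lemma expo_of_perm (s1 s2 : seq var) : perm_eq s1 s2 -> expo_of s1 = expo_of s2.
Proof. by move/permP => eq_count; apply/ffunP => u; rewrite !ffunE eq_count. Qed.
Lemma vacuum_delta : vacuum = delta_state (expo_of [::]).
Proof. by have -> : expo_of [::] = [ffun => 0%N] by apply/ffunP => u; rewrite !ffunE. Qed.

Lemma mulv_delta (t : var) (k0 : expo) :
  odd_var t = false -> mulv t (delta_state k0) = delta_state (incr k0 t).
Proof.
move=> pt; apply: functional_extensionality => k.
rewrite /mulv /mul_wt pt /delta_state [k == _]eq_sym incr_eq eq_sym.
by case: (0 < k t)%N; rewrite /= ?mul1r ?mul0r.
Qed.
Lemma derv_delta (t : var) (k0 : expo) : odd_var t = false ->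
  derv t (delta_state k0) = fun k => (k0 t)%:R * delta_state (decr k0 t) k.
Proof.
move=> pt; apply: functional_extensionality => k; rewrite /derv /der_wt pt /delta_state incr_eq.
case: (posnP (k0 t)) => [->|kpos] /=; first by rewrite !mul0r mulr0.
case: eqP => [->|_]; last by rewrite !mulr0.
by rewrite decrE eqxx subn1 (ltn_predK kpos).
Qed.

Lemma lact_delta (a b : vidx m0 m1 n) (k0 : expo) : odd_row a = false -> odd_row b = false ->
  lact (a, b) (delta_state k0) = fun k => \sum_(l <- enum 'I_n)
     (k0 (b, l))%:R * delta_state (incr (decr k0 (b, l)) (a, l)) k
   + (if proper_of b is Some j then delta_state (incr k0 (a, j)) k else 0).
Proof.
move=> pa pb; apply: functional_extensionality => k.
rewrite /lact /pol_terms big_cat big_map /=; congr (_ + _).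
  apply: eq_bigr => l _.
  by rewrite /polop /= derv_delta // (linear_scale (linear_mulv _)) mulv_delta.
by case: (proper_of b) => [j|]; rewrite ?big_nil // big_seq1 /polop /= mulv_delta.
Qed.

Section Capelli.
Variables (h : nat) (ii jj : 'I_h -> 'I_n) (bb : 'I_h -> 'I_m1).
Hypothesis bb_inj : injective bb.

Local Notation bt k := (@beta m0 m1 n (bb k)).
Local Notation pp x := (@prop m0 m1 n x).

(* The right half e_{b_1 j_1} ... e_{b_h j_h} of the Capelli word only creates
   the monomial prod_k x_{b_k, j_k} (the vacuum has no variables to polarize). *)
Lemma wact_right_half (r : seq 'I_h) :
  wact [seq (bt k, pp (jj k)) | k <- r] vacuum = delta_state (expo_of [seq (bt k, jj k) | k <- r]).
Proof.
elim: r => [|k r IH] /=; first exact: vacuum_delta.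
rewrite IH lact_delta //; apply: functional_extensionality => x.
rewrite big1 ?add0r /= ?expo_of_cons // => l _; rewrite ffunE.
have -> : count_mem (pp (jj k), l) [seq (bt k0, jj k0) | k0 <- r] = 0%N.
  by apply/count_memPn; apply/mapP => -[k' _] /(congr1 fst).
by rewrite mul0r.
Qed.

(* The left half e_{i_1 b_1} ... e_{i_h b_h} then polarizes each x_{b_k, j_k}
   into x_{i_k, j_k}; the b_k are distinct, so each polarization sees a single
   variable of its row. *)
Lemma wact_left_half (r : seq 'I_h) (s0 : seq var) : uniq r ->
  (forall k l, k \in r -> count_mem (bt k, l) s0 = 0%N) ->
  wact [seq (pp (ii k), bt k) | k <- r] (delta_state (expo_of ([seq (bt k, jj k) | k <- r] ++ s0)))
  = delta_state (expo_of ([seq (pp (ii k), jj k) | k <- r] ++ s0)).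
Proof.
elim: r s0 => [|k r IH] s0 //= /andP[kr ur] hs0.
have -> : expo_of ((bt k, jj k) :: [seq (bt k0, jj k0) | k0 <- r] ++ s0) =
          expo_of ([seq (bt k0, jj k0) | k0 <- r] ++ (bt k, jj k) :: s0).
  by apply: expo_of_perm; rewrite -cat1s perm_catCA.
rewrite IH //; last first.
  move=> k' l k'r /=; rewrite hs0 ?inE ?k'r ?orbT // addn0.
  apply/eqP; rewrite eqb0; apply/negP => /eqP [/bb_inj eq_k _].
  by move: kr; rewrite eq_k k'r.
rewrite lact_delta //; apply: functional_extensionality => x /=.
rewrite addr0.
set S := [seq (pp (ii k0), jj k0) | k0 <- r] ++ (bt k, jj k) :: s0.
under eq_bigr => l _ do rewrite ffunE /S count_cat /= hs0 ?inE ?eqxx // addn0.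
under eq_bigr => l _.
  have -> : count_mem (bt k, l) [seq (pp (ii k0), jj k0) | k0 <- r] = 0%N.
    by apply/count_memPn; apply/mapP => -[k' _] /(congr1 fst).
  rewrite add0n xpair_eqE eqxx /=.
over.
rewrite sum_delta ?enum_uniq ?mem_enum //.
have -> : expo_of S = incr (expo_of ([seq (pp (ii k0), jj k0) | k0 <- r] ++ s0)) (bt k, jj k).
  by rewrite expo_of_cons; apply: expo_of_perm; rewrite /S -cat1s perm_catCA.
by rewrite decr_incr expo_of_cons.
Qed.

Lemma of_cpoly_diag :
  of_cpoly (diag_monom ii jj) = delta_state (expo_of [seq (pp (ii k), jj k) | k <- enum 'I_h]).
Proof.
rewrite /diag_monom; elim: (enum 'I_h) => [|k r IH] /=; first by rewrite of_cpoly_one vacuum_delta.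
by rewrite of_cpoly_mulvar IH mulv_delta // expo_of_cons.
Qed.

Lemma wact_capelli : wact (capelli_word m0 ii jj bb) vacuum = of_cpoly (diag_monom ii jj).
Proof.
rewrite /capelli_word wact_cat wact_right_half of_cpoly_diag.
rewrite -[X in delta_state (expo_of X)]cats0 -[X in _ = delta_state (expo_of X)]cats0.
by rewrite wact_left_half ?enum_uniq.
Qed.
End Capelli.
End SuperFock.

(* The vacuum functional only depends on the coefficients [fcoef] of x, so it
   passes to formal linear combinations: it kills the span of the kernel
   generators, i.e. the relators and the left ideal of irregular monomials. *)
Lemma vac_coef_fcoef m0 m1 n (k : {ffun vidx m0 m1 n * 'I_n -> nat}) (x : fa m0 m1 n)
    (W : seq (seq (letter m0 m1 n))) :
  uniq W -> {subset [seq t.2 | t <- x] <= W} ->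
  vac_coef k x = \sum_(w <- W) fcoef x w * wact w (@vacuum m0 m1 n) k.
Proof.
move=> uW sW; rewrite /fcoef.
under eq_bigr => w _ do rewrite big_distrl /= big_mkcond /=.
rewrite exchange_big /= /vac_coef big_seq [RHS]big_seq; apply: eq_bigr => t tx.
rewrite (eq_bigr (fun w => (t.2 == w)%:R * (t.1 * wact w (@vacuum m0 m1 n) k))); last first.
  by move=> w _; case: eqP; rewrite ?mul1r ?mul0r.
by rewrite sum_delta //; apply: sW; apply: map_f.
Qed.

Lemma vac_coef_ker_gen m0 m1 n (k : {ffun vidx m0 m1 n * 'I_n -> nat}) (g : fa m0 m1 n) :
  ker_gen g -> vac_coef k g = 0.
Proof.
case=> [[u [v [a [b [c [d ->]]]]]] | [u [w [irr ->]]]]; first exact: vac_coef_relator.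
rewrite /vac_coef big_seq1 /= wact_cat irregular_annihilates //.
by rewrite (linear_zero (linear_wact _)) mulr0.
Qed.

Lemma vac_coef_span m0 m1 n (k : {ffun vidx m0 m1 n * 'I_n -> nat}) (x : fa m0 m1 n) :
  in_span (@ker_gen m0 m1 n) x -> vac_coef k x = 0.
Proof.
case=> gs [gs_ker x_comb].
set W := undup ([seq t.2 | t <- x] ++ flatten [seq [seq t.2 | t <- g.2] | g <- gs]).
have uW : uniq W by apply: undup_uniq.
rewrite (vac_coef_fcoef k uW); last by move=> w wx; rewrite mem_undup mem_cat wx.
under eq_bigr => w _ do rewrite x_comb big_distrl /=.
rewrite exchange_big /= big1_seq // => g /andP[_ g_in].
under eq_bigr => w _ do rewrite -mulrA.
rewrite -mulr_sumr -(vac_coef_fcoef k uW).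
  by rewrite vac_coef_ker_gen ?mulr0 //; apply: gs_ker.
move=> w wg; rewrite mem_undup mem_cat; apply/orP; right.
by apply/flattenP; exists [seq t.2 | t <- g.2] => //; apply: map_f.
Qed.

Lemma pcoef_koszul n (P : gl_elt n) (m : monom n) :
  pcoef (koszul P) m = \sum_(t <- P) t.1 * pcoef (tau_one t.2) m.
Proof.
rewrite /pcoef /koszul big_flatten big_map; apply: eq_bigr => t _.
by rewrite /pscale big_map mulr_sumr.
Qed.

Theorem mainTheorem8 (n h : nat) (hpos : (1 <= h)%N) (i j : 'I_h -> 'I_n)
  (m0 m1 : nat) (b : 'I_h -> 'I_m1) (binj : injective b) (P : gl_elt n) :
  proj_rep (capelli_word m0 i j b) P ->
  forall m : monom n, pcoef (koszul P) m = pcoef (diag_monom i j) m.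
Proof.
move=> hP m; set k := @embed_expo m0 m1 n m.
(* X - P lies in the kernel of p, so the vacuum functional at x^k kills it; *)
have := vac_coef_span k hP.
rewrite /vac_coef /fa_sub_word big_cons mul1r /embed !big_map /= => /eqP.
rewrite addr_eq0 => /eqP capelli_eq.
(* on X it gives (i_1|j_1)...(i_h|j_h), on the embedded P it gives K(P). *)
rewrite -[RHS](of_cpoly_embed m0 m1) -/k -(@wact_capelli m0 m1 n h i j b binj) capelli_eq.
rewrite pcoef_koszul -sumrN.
by apply: eq_bigr => t _; rewrite -(of_cpoly_embed m0 m1) of_cpoly_tau mulNr opprK.
Qed.
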